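(* Let $E$ be a semi-Montel or Schwartz space, let $\mathcal{FV}(\Omega)$ be a dom-space and let $U$ fix the topology in $\mathcal{FV}(\Omega)$. Then for every $f\in\mathcal{FV}_{E'}(U,E)_{lb}$ the map $\mathscr{R}_f\colon E'\to\mathcal{FV}(\Omega)$, $\mathscr{R}_f(e'):=f_{e'}$, belongs to $L(E'_\gamma,\mathcal{FV}(\Omega))$, and for every $\alpha\in\mathfrak{A}$ the set $\mathscr{R}_f(B_\alpha^\circ)$ is relatively compact in $\mathcal{FV}(\Omega)$, where $B_\alpha:=\{x\in E:p_\alpha(x)<1\}$.
   Context: $\mathbb{K}\in\{\mathbb{R},\mathbb{C}\}$; $E$ is a non-trivial locally convex Hausdorff space over $\mathbb{K}$ with a directed fundamental system of seminorms $(p_\alpha)_{\alpha\in\mathfrak{A}}$; $E'$ its dual, $B_\alpha^\circ$ the polar of $B_\alpha$ in $E'$, and $E'_\gamma$ is $E'$ with the topology of uniform convergence on precompact subsets of $E$. Semi-Montel: bounded sets are relatively compact; Schwartz space in the usual sense. Weighted function spaces: Let $\Omega,J,L$ be non-empty sets, $(M_l)_{l\in L}$ non-empty sets and $\mathcal{V}=((\nu_{j,l,m})_{m\in M_l})_{j\in J,l\in L}$ functions $\nu_{j,l,m}\colon\Omega\to[0,\infty)$ such that for all $x\in\Omega$, $l\in L$ there is $j\in J$ with $\nu_{j,l,m}(x)>0$ for all $m\in M_l$. Let $\mathcal{M}_{\mathrm{top}}:=\bigcup_lM_l$, and $\mathcal{M}_0,\mathcal{M}_r$ sets, the three pairwise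 disjoint, $\mathcal{M}$ their union; $(\omega_m)_{m\in\mathcal{M}}$ non-empty sets with $\Omega\subset\omega_m$ for $m\in\mathcal{M}_{\mathrm{top}}$; $T^{\mathbb{K}}_m\colon\operatorname{dom}T^{\mathbb{K}}_m\subset\mathbb{K}^\Omega\to\mathbb{K}^{\omega_m}$ linear. $\mathcal{FV}(\Omega)$ is the set of $f\in\bigcap_{m\in\mathcal{M}}\operatorname{dom}T^{\mathbb{K}}_m\cap\bigcap_{m\in\mathcal{M}_0}\ker T^{\mathbb{K}}_m$ with $|f|_{j,l}:=\sup_{x\in\Omega,m\in M_l}|T^{\mathbb{K}}_m(f)(x)|\nu_{j,l,m}(x)<\infty$ for all $j,l$, with these seminorms. $T^{\mathbb{K}}_{m,x}(f):=T^{\mathbb{K}}_m(f)(x)$. It is a dom-space if the seminorms are directed and point evaluations $f\mapsto f(x)$ are continuous. $U\subset\bigcup_{m\in\mathcal{M}}\{m\}\times\omega_m$ fixes the topology in $\mathcal{FV}(\Omega)$ if for all $j\in J$, $l\in L$ there are $i\in J$, $k\in L$, $C>0$ with $|f|_{j,l}\le C\sup\{|T^{\mathbb{K}}_m(f)(x)|\nu_{i,k,m}(x): x\in\Omega,\,m\in M_k,\,(m,x)\in U\}$ for all $f\in\mathcal{FV}(\Omega)$. $\mathcal{FV}_{E'}(U,E)$ is the set of $f\colon U\to E$ such that for each $e'\in E'$ there is a (unique) $f_{e'}\in\mathcal{FV}(\Omega)$ with $T^{\mathbb{K}}_m(f_{e'})(x)=e'(f(m,x))$ for all $(m,x)\in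 U$. For $i\in J$, $k\in L$ let $N_{U,i,k}(f):=\{f(m,x)\nu_{i,k,m}(x): x\in\Omega,\,m\in M_k,\,(m,x)\in U\}$, and $\mathcal{FV}_{E'}(U,E)_{lb}$ is the set of $f\in\mathcal{FV}_{E'}(U,E)$ with $N_{U,i,k}(f)$ bounded in $E$ for all $i\in J$, $k\in L$. *)

From HB Require Import structures.
From mathcomp Require Import all_boot all_order all_algebra.
From mathcomp Require Import complex.
From mathcomp Require Import boolp classical_sets cardinality reals.
Import Order.TTheory GRing.Theory Num.Theory.
Local Open Scope ring_scope.
Local Open Scope classical_set_scope.

Definition Kf (R : realType) (b : bool) : numFieldType :=
  if b then (R : numFieldType) else (R[i] : numFieldType).

Definition kabs (R : realType) (b : bool) : Kf R b -> R :=
  match b return Kf R b -> R with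
  | true => fun x : R => `|x|
  | false => fun z : R[i] => complex.Re `|z|
  end.

Definition kofR (R : realType) (b : bool) : R -> Kf R b :=
  match b return R -> Kf R b with
  | true => fun x : R => x
  | false => fun x : R => (x%:C)%C
  end.

(* Topologies given by a family of "balls" bl i e x (i an index of a    *)
(* seminorm, e > 0 a radius, x a centre).  Open sets, continuity,      *)
Section BallTopology.
Variable R : realType.

Definition bopen {V I : Type} (bl : I -> R -> V -> set V) (O : set V) : Prop :=
  forall x, O x -> exists i : I, exists2 e : R, 0 < e & bl i e x `<=` O.

Definition bcontinuous {V I W J : Type} (blV : I -> R -> V -> set V)
    (blW : J -> R -> W -> set W) (g : V -> W) : Prop :=
  forall O : set W, bopen blW O -> bopen blV (g @^-1` O).

Definition bclosure {V I : Type} (bl : I -> R -> V -> set V) (A : set V) : set V :=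
  [set x | forall O : set V, bopen bl O -> O x -> exists2 y, A y & O y].

Definition bcompact {V I : Type} (bl : I -> R -> V -> set V) (A : set V) : Prop :=
  forall F : set (set V), (forall O, F O -> bopen bl O) ->
    A `<=` \bigcup_(O in F) O ->
    exists2 G : set (set V), finite_set G /\ G `<=` F & A `<=` \bigcup_(O in G) O.

Definition brelcompact {V I : Type} (bl : I -> R -> V -> set V) (A : set V) : Prop :=
  bcompact bl (bclosure bl A).

End BallTopology.
Arguments bopen {R V I}.
Arguments bcontinuous {R V I W J}.
Arguments bclosure {R V I}.
Arguments bcompact {R V I}.
Arguments brelcompact {R V I}.

Section LCS.
Variables (R : realType) (b : bool) (E : lmodType (Kf R b)) (A : Type)
  (p : A -> E -> R).

Definition is_seminorm (q : E -> R) : Prop :=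
  (forall x y, q (x + y) <= q x + q y) /\
  (forall (c : Kf R b) x, q (c *: x) = @kabs R b c * q x).

Definition directed_seminorms : Prop :=
  forall a1 a2 : A, exists a3 : A, exists2 C : R, 0 < C &
    forall x, Num.max (p a1 x) (p a2 x) <= C * p a3 x.

Definition lcs_hausdorff : Prop := forall x : E, x != 0 -> exists a, p a x != 0.

Definition Eball (a : A) (e : R) (x : E) : set E := [set y | p a (y - x) < e].

Definition Kball (_ : unit) (e : R) (z : Kf R b) : set (Kf R b) :=
  [set w | @kabs R b (w - z) < e].

Definition lcs_bounded (B : set E) : Prop :=
  forall a, exists C : R, forall x, B x -> p a x <= C.

Definition q_precompact (q : E -> R) (B : set E) : Prop :=
  forall e : R, 0 < e -> exists xs : seq E,
    B `<=` [set y | exists2 x, x \in xs & q (y - x) < e].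

Definition lcs_precompact (B : set E) : Prop := forall a, q_precompact (p a) B.

Definition semi_montel : Prop :=
  forall B : set E, lcs_bounded B -> brelcompact Eball B.

Definition unit_ball (a : A) : set E := [set x | p a x < 1].

Definition schwartz : Prop :=
  forall a : A, exists a' : A, q_precompact (p a) (unit_ball a').

Definition is_dual_elt (e : E -> Kf R b) : Prop :=
  (forall (c : Kf R b) x y, e (c *: x + y) = c * e x + e y) /\
  bcontinuous Eball Kball e.

Definition dual := {e : E -> Kf R b | is_dual_elt e}.

Definition precompact_set := {B : set E | lcs_precompact B}.

Definition gamma_ball (B : precompact_set) (e : R) (y0 : dual) : set dual :=
  [set y | forall x, proj1_sig B x ->
     @kabs R b (proj1_sig y x - proj1_sig y0 x) < e].

Definition polar (a : A) : set dual :=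
  [set y | forall x, unit_ball a x -> @kabs R b (proj1_sig y x) <= 1].

End LCS.
Arguments is_seminorm {R b E}.
Arguments directed_seminorms {R b E A}.
Arguments lcs_hausdorff {R b E A}.
Arguments Eball {R b E A}.
Arguments lcs_bounded {R b E A}.
Arguments q_precompact {R b E}.
Arguments lcs_precompact {R b E A}.
Arguments semi_montel {R b E A}.
Arguments unit_ball {R b E A}.
Arguments schwartz {R b E A}.
Arguments is_dual_elt {R b E A}.
Arguments dual {R b E A}.
Arguments precompact_set {R b E A}.
Arguments gamma_ball {R b E A}.
Arguments polar {R b E A}.
Arguments Kball {R b}.

Record wdata (R : realType) (b : bool) := WData {
  Om : Type;
  Jt : Type;
  Lt : Type;
  Mt : Type;
  Ml : Lt -> set Mt;
  M0 : set Mt;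
  Mr : set Mt;
  om : Mt -> Type;
  inc : forall m : Mt, Om -> om m; (* inclusion Omega c omega_m (m in M_top) *)
  nu : Jt -> Lt -> Mt -> Om -> R;
  dom : forall m : Mt, set (Om -> Kf R b);
  T : forall m : Mt, (Om -> Kf R b) -> om m -> Kf R b
}.

Arguments Om {R b}.
Arguments Jt {R b}.
Arguments Lt {R b}.
Arguments Mt {R b}.
Arguments Ml {R b}.
Arguments M0 {R b}.
Arguments Mr {R b}.
Arguments om {R b}.
Arguments inc {R b}.
Arguments nu {R b}.
Arguments dom {R b}.
Arguments T {R b}.

Section Weighted.
Variables (R : realType) (b : bool) (W : wdata R b).
Local Notation K := (Kf R b).
Local Notation Om := (Om W). Local Notation Jt := (Jt W).
Local Notation Lt := (Lt W). Local Notation Mt := (Mt W).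
Local Notation Ml := (Ml W). Local Notation M0 := (M0 W).
Local Notation Mr := (Mr W). Local Notation om := (om W).
Local Notation inc := (inc W). Local Notation nu := (nu W).
Local Notation dom := (dom W). Local Notation T := (T W).

Definition Mtop : set Mt := \bigcup_(l in [set: Lt]) Ml l.

Definition wdata_ok : Prop :=
  [/\ (exists x : Om, True), (exists j : Jt, True) & (exists l : Lt, True)] /\
  (forall l, exists m, Ml l m) /\
  (forall m, exists y : om m, True) /\
  [/\ Mtop `&` M0 = set0, Mtop `&` Mr = set0, M0 `&` Mr = set0 &
      forall m, Mtop m \/ M0 m \/ Mr m] /\
  (forall m, Mtop m -> injective (inc m)) /\
  (forall j l m x, Ml l m -> 0 <= nu j l m x) /\
  (forall x l, exists j, forall m, Ml l m -> 0 < nu j l m x) /\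
  (forall m, dom m (fun _ => 0) /\
     forall (c : K) f g, dom m f -> dom m g ->
       dom m (fun x => c * f x + g x) /\
       forall y, T m (fun x => c * f x + g x) y = c * T m f y + T m g y).

Definition FV (f : Om -> K) : Prop :=
  [/\ forall m, dom m f,
      forall m, M0 m -> forall y, T m f y = 0 &
      forall j l, exists C : R, forall x m, Ml l m ->
         @kabs R b (T m f (inc m x)) * nu j l m x <= C].

Definition FVt := {f : Om -> K | FV f}.

Definition wsemi (j : Jt) (l : Lt) (f : Om -> K) : R :=
  sup [set r : R | exists x m, Ml l m /\ r = @kabs R b (T m f (inc m x)) * nu j l m x].

Definition FVball (jl : Jt * Lt) (e : R) (f : FVt) : set FVt :=
  [set g | wsemi jl.1 jl.2 (fun x => proj1_sig g x - proj1_sig f x) < e].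

Definition dom_space : Prop :=
  (forall j1 l1 j2 l2, exists j3 l3, exists2 C : R, 0 < C &
     forall f : FVt, Num.max (wsemi j1 l1 (proj1_sig f)) (wsemi j2 l2 (proj1_sig f))
                     <= C * wsemi j3 l3 (proj1_sig f)) /\
  (forall x : Om, bcontinuous FVball (@Kball R b) (fun f : FVt => proj1_sig f x)).

(* U c union_m {m} x omega_m, encoded as a family of subsets U m of omega_m *)
Definition fixes_topology (U : forall m, set (om m)) : Prop :=
  forall j l, exists i k, exists2 C : R, 0 < C &
    forall f : FVt,
      wsemi j l (proj1_sig f) <=
      C * sup [set r : R | exists x m, [/\ Ml k m, U m (inc m x) &
                 r = @kabs R b (T m (proj1_sig f) (inc m x)) * nu i k m x]].

Section VectorValued.
Variables (E : lmodType K) (A : Type) (p : A -> E -> R).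

(* f : U -> E is encoded as a map on all (m, y), only values on U matter *)
Definition FVE' (U : forall m, set (om m)) (f : forall m, om m -> E) : Prop :=
  forall e' : dual p, exists g : FVt,
    forall m y, U m y -> T m (proj1_sig g) y = proj1_sig e' (f m y).

Definition N_U (U : forall m, set (om m)) (f : forall m, om m -> E)
    (i : Jt) (k : Lt) : set E :=
  [set z | exists x m, [/\ Ml k m, U m (inc m x) &
             z = @kofR R b (nu i k m x) *: f m (inc m x)]].

Definition FVE'_lb (U : forall m, set (om m)) (f : forall m, om m -> E) : Prop :=
  FVE' U f /\ forall i k, lcs_bounded p (N_U U f i k).

End VectorValued.
End Weighted.
Arguments Mtop {R b}.
Arguments wdata_ok {R b}.
Arguments FV {R b}.
Arguments FVt {R b}.
Arguments wsemi {R b}.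
Arguments FVball {R b}.
Arguments dom_space {R b}.
Arguments fixes_topology {R b}.
Arguments FVE' {R b W E A}.
Arguments N_U {R b W E}.
Arguments FVE'_lb {R b W E A}.

From HB Require Import structures.
From mathcomp Require Import all_boot all_order all_algebra finmap.
From mathcomp Require Import complex.
From mathcomp Require Import boolp classical_sets cardinality reals filter.
From mathcomp Require Import ring lra.
Import Order.TTheory GRing.Theory Num.Theory.
Local Open Scope ring_scope.
Local Open Scope classical_set_scope.

(* Since U fixes the topology of FV(Omega), each seminorm of R_f e1 - R_f e2 is
   bounded by C sup |e1 - e2| over a set N_U(f)_{i,k}, which is bounded in E and
   hence precompact because E is semi-Montel or Schwartz; linearity of R_f and its
   continuity on E'_gamma follow.  For the compactness we use ultrafilters: along an
   ultrafilter containing the polar B_a^o, each e'(x) stays bounded by p_a(x), so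
   e' converges pointwise to some phi, which again lies in B_a^o.  As B_a^o is
   equicontinuous, the convergence is uniform on the precompact sets N_U(f)_{i,k},
   so R_f e' converges to R_f phi in FV(Omega).  Every ultrafilter on B_a^o thus has
   an R_f-limit in B_a^o, which makes R_f(B_a^o) both closed and compact. *)

Section Scalars.
Context {R : realType} {b : bool}.
Local Notation K := (Kf R b).
Local Notation kabs := (kabs R b).
Local Notation kofR := (kofR R b).

Lemma kofR_kabs (x : K) : kofR (kabs x) = `|x|.
Proof. by case: b x. Qed.

Lemma kofR_inj : injective kofR.
Proof. by case: b => /= x y //; apply: complexI. Qed.

Lemma ler_kofR r s : (kofR r <= kofR s) = (r <= s).
Proof. by case: b => //=; apply: lecR. Qed.

Lemma kofR0 : kofR 0 = 0. Proof. by case: b. Qed.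
Lemma kofR1 : kofR 1 = 1. Proof. by case: b. Qed.

Lemma kofRD r s : kofR (r + s) = kofR r + kofR s.
Proof. by case: b => //=; apply: rmorphD. Qed.

Lemma kofRM r s : kofR (r * s) = kofR r * kofR s.
Proof. by case: b => //=; apply: rmorphM. Qed.

Lemma kabs_kofR r : kabs (kofR r) = `|r|.
Proof.
apply: kofR_inj; rewrite kofR_kabs; case: b => //=.
by rewrite normc_def /= expr0n /= addr0 sqrtr_sqr.
Qed.

Lemma kabs_ge0 x : 0 <= kabs x.
Proof. by rewrite -ler_kofR kofR0 kofR_kabs. Qed.

Lemma kabsD x y : kabs (x + y) <= kabs x + kabs y.
Proof. by rewrite -ler_kofR kofRD !kofR_kabs ler_normD. Qed.

Lemma kabsM x y : kabs (x * y) = kabs x * kabs y.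
Proof. by apply: kofR_inj; rewrite kofRM !kofR_kabs normrM. Qed.

Lemma kabsN x : kabs (- x) = kabs x.
Proof. by apply: kofR_inj; rewrite !kofR_kabs normrN. Qed.

Lemma kabsB x y : kabs (x - y) = kabs (y - x).
Proof. by rewrite -kabsN opprB. Qed.

Lemma kabs0 : kabs 0 = 0.
Proof. by rewrite -kofR0 kabs_kofR normr0. Qed.

Lemma kabs1 : kabs 1 = 1.
Proof. by rewrite -kofR1 kabs_kofR normr1. Qed.

Lemma kabs_gt0 x : x != 0 -> 0 < kabs x.
Proof.
move=> x0; rewrite lt_def kabs_ge0 andbT.
by apply: contra x0 => /eqP k0; rewrite -normr_eq0 -kofR_kabs k0 kofR0.
Qed.

End Scalars.

Section ComplexModulus.
Context {R : realType}.
Local Notation kabs := (kabs R false).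

Lemma kabs_complexE (z : R[i]) :
  kabs z = Num.sqrt (complex.Re z ^+ 2 + complex.Im z ^+ 2).
Proof. by rewrite /kabs normc_def. Qed.

Lemma normr_Re_le_kabs (z : R[i]) : `|complex.Re z| <= kabs z.
Proof.
by rewrite kabs_complexE -sqrtr_sqr ler_sqrt ?addr_ge0 ?sqr_ge0 // lerDl sqr_ge0.
Qed.

Lemma normr_Im_le_kabs (z : R[i]) : `|complex.Im z| <= kabs z.
Proof.
by rewrite kabs_complexE -sqrtr_sqr ler_sqrt ?addr_ge0 ?sqr_ge0 // lerDr sqr_ge0.
Qed.

Lemma kabs_le_ReIm (z : R[i]) : kabs z <= `|complex.Re z| + `|complex.Im z|.
Proof.
rewrite {1}[z]complexE; apply: le_trans (kabsD _ _) _.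
have kC (r : R) : kabs (r%:C)%C = `|r| := kabs_kofR (b := false) r.
have ki : kabs 'i = 1 by rewrite kabs_complexE /= expr0n expr1n add0r sqrtr1.
by rewrite kabsM ki mul1r !kC.
Qed.

End ComplexModulus.

Section UltraLimits.
Context {R : realType} {X : Type} {F : set_system X}.

Lemma ultra_bounded_cvg_real (h : X -> R) (M : R) : UltraFilter F ->
  F [set x | `|h x| <= M] ->
  exists l, forall e, 0 < e -> F [set x | `|h x - l| < e].
Proof.
(* The limit is the supremum of the t with t <= h eventually along F. *)
move=> FU FM; pose S := [set t | F [set x | t <= h x]].
have SM : S (- M) by apply: filterS FM => x /=; rewrite ler_norml => /andP[].
have S_ub t : S t -> t <= M.
  move=> St; have [x [/= tx]] := filter_ex (filterI St FM).
  by rewrite ler_norml => /andP[_ /(le_trans tx)].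
have supS : has_sup S by split; [exists (- M) | exists M => t /S_ub].
exists (sup S) => e e0; have [t St lt_t] := sup_adherent e0 supS.
have nS : ~ S (sup S + e / 2).
  by move=> /(sup_upper_bound supS); rewrite leNgt ltrDl divr_gt0.
have [//|FC] := in_ultra_setVsetC [set x | sup S + e / 2 <= h x] FU.
apply: filterS (filterI St FC) => x [/= tx /negP]; rewrite -ltNge => hx.
have := lt_le_trans lt_t tx; rewrite ltr_norml; lra.
Qed.

End UltraLimits.

Definition kcvg {R : realType} {b : bool} {X : Type} (F : set_system X)
    (h : X -> Kf R b) (l : Kf R b) : Prop :=
  forall e, 0 < e -> F [set x | kabs R b (h x - l) < e].

Section ScalarUltraLimits.
Context {R : realType} {b : bool} {X : Type} {F : set_system X}.
Local Notation K := (Kf R b).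
Local Notation kabs := (kabs R b).
Local Notation kcvg := (kcvg F).

Lemma kcvg_unique (h : X -> K) l1 l2 : ProperFilter F ->
  kcvg h l1 -> kcvg h l2 -> l1 = l2.
Proof.
move=> FF h1 h2; apply/eqP; rewrite -subr_eq0; apply/negPn/negP => /kabs_gt0 d0.
have d20 : 0 < kabs (l1 - l2) / 2 by rewrite divr_gt0.
have [x [/= x1 x2]] := filter_ex (filterI (h1 _ d20) (h2 _ d20)).
have := kabsD (l1 - h x) (h x - l2); rewrite addrA subrK [kabs (l1 - h x)]kabsB; lra.
Qed.

Lemma kcvg_le (h : X -> K) l M : ProperFilter F ->
  F [set x | kabs (h x) <= M] -> kcvg h l -> kabs l <= M.
Proof.
move=> FF FM hl; apply/ler_addgt0Pr => e e0.
have [x [/= hM hx]] := filter_ex (filterI FM (hl _ e0)).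
have := kabsD (l - h x) (h x); rewrite subrK kabsB; lra.
Qed.

Lemma kcvg_lc (h1 h2 : X -> K) l1 l2 (c : K) : Filter F ->
  kcvg h1 l1 -> kcvg h2 l2 -> kcvg (fun x => c * h1 x + h2 x) (c * l1 + l2).
Proof.
move=> FF cv1 cv2 e e0; have c0 := kabs_ge0 c.
pose d := e / (2 * (kabs c + 1)).
have d0 : 0 < d by rewrite divr_gt0 // mulr_gt0 //; lra.
have cd : kabs c * d + d = e / 2 by rewrite /d; field; lra.
apply: filterS (filterI (cv1 _ d0) (cv2 _ d0)) => x [/= x1 x2].
have -> : c * h1 x + h2 x - (c * l1 + l2) = c * (h1 x - l1) + (h2 x - l2) by ring.
apply: le_lt_trans (kabsD _ _) _; rewrite kabsM.
have : kabs c * kabs (h1 x - l1) <= kabs c * d by rewrite ler_wpM2l // ltW.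
lra.
Qed.

Lemma ultra_bounded_kcvg (h : X -> K) M : UltraFilter F ->
  F [set x | kabs (h x) <= M] -> exists l, kcvg h l.
Proof.
case: b h => h FU FM; first exact: ultra_bounded_cvg_real FM.
have [l1 cv1] := ultra_bounded_cvg_real (fun x => complex.Re (h x)) _ FU
  (filterS (fun x => le_trans (normr_Re_le_kabs _)) FM).
have [l2 cv2] := ultra_bounded_cvg_real (fun x => complex.Im (h x)) _ FU
  (filterS (fun x => le_trans (normr_Im_le_kabs _)) FM).
exists (l1 +i* l2)%C => e e0; have e20 : 0 < e / 2 by rewrite divr_gt0.
apply: filterS (filterI (cv1 _ e20) (cv2 _ e20)) => x [/= x1 x2].
apply: le_lt_trans (kabs_le_ReIm _) _.
by rewrite [e]splitr ltrD // raddfB.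
Qed.

End ScalarUltraLimits.


Lemma ultra_filter_from {I X : Type} (D : set I) (B : I -> set X) :
  D !=set0 -> (forall i j, D i -> D j -> exists2 k, D k & B k `<=` B i `&` B j) ->
  (forall i, D i -> B i !=set0) ->
  exists2 F : set_system X, UltraFilter F & forall i, D i -> F (B i).
Proof.
move=> D0 BI B0; have FB := filter_from_filter D0 BI.
have [F [FU sBF]] := ultraFilterLemma (filter_from_proper FB B0).
by exists F => // i Di; apply: sBF; exists i.
Qed.

Lemma subset_bclosure {R : realType} {V I : Type} (bl : I -> R -> V -> set V)
    (A : set V) : A `<=` bclosure bl A.
Proof. by move=> x Ax O _ Ox; exists x. Qed.

Section DistanceBalls.
Context {R : realType} {V I : Type}.
Variable d : I -> V -> V -> R.

(* [Eball p], [Kball] and [FVball W] are all of the form [dball d]. *)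
Definition dball (i : I) (e : R) (x : V) : set V := [set y | d i y x < e].

Lemma dball_open i e x :
  (forall i x y z, d i x z <= d i x y + d i y z) -> bopen dball (dball i e x).
Proof.
move=> d_tri y /= hy; exists i, (e - d i y x); first by rewrite subr_gt0.
by move=> z hz /=; have := d_tri i z y x; rewrite /dball /= in hz *; lra.
Qed.

Section UltraLimitImage.
Context {X : Type} (g : X -> V) (S : set X).
Hypothesis g_ultra_limit : forall {F : set_system X}, UltraFilter F -> F S ->
  exists2 s, S s & forall i e, 0 < e -> F [set x | d i (g x) (g s) < e].

Lemma bcompact_image : bcompact dball (g @` S).
Proof.
(* Without a finite subcover, the points of S whose image avoids finitely many
   members of the cover form a filter base; the limit of an ultrafilter containing
   it lies in some member of the cover, a contradiction. *)
move=> C Copen cover; apply: contrapT => nofin.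
pose D := [set G : set (set V) | finite_set G /\ G `<=` C].
pose B G := S `&` [set x | forall O, G O -> ~ O (g x)].
have D0 : D set0 by split.
have [F FU FB] : exists2 F : set_system X, UltraFilter F & forall G, D G -> F (B G).
  apply: ultra_filter_from; first by exists set0.
  - move=> G1 G2 [fin1 sub1] [fin2 sub2]; exists (G1 `|` G2).
      by split; [rewrite finite_setU | move=> O [/sub1|/sub2]].
    by move=> x [Sx nO]; split; split=> // O GO; apply: nO; [left | right].
  - move=> G [finG subG]; apply: contrapT => B0; apply: nofin; exists G => //.
    move=> _ [x Sx <-]; apply: contrapT => nG; apply: B0; exists x.
    by split=> // O GO Ogx; apply: nG; exists O.
have [s Ss lim_s] := g_ultra_limit FU (filterS (fun x => @proj1 _ _) (FB set0 D0)).
have [O CO Ogs] := cover (g s) (ex_intro2 _ _ s Ss erefl).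
have [i [e e0 ballO]] := Copen O CO (g s) Ogs.
have DO : D [set O] by split; [exact: finite_set1 | move=> _ ->].
have [x [[_ /(_ O erefl) nOx] /= near_x]] := filter_ex (filterI (FB _ DO) (lim_s i e e0)).
exact/nOx/ballO.
Qed.

Hypothesis I_inhabited : inhabited I.
Hypothesis d_triangle : forall i x y z, d i x z <= d i x y + d i y z.
Hypothesis d_sym : forall i x y, d i x y = d i y x.
Hypothesis d_refl : forall i x, d i x x = 0.
Hypothesis d_directed : forall i1 i2, exists i3, exists2 C : R, 0 < C &
  forall x y, Num.max (d i1 x y) (d i2 x y) <= C * d i3 x y.
Hypothesis d_separated : forall x y, (forall i e, 0 < e -> d i x y < e) -> x = y.

Lemma bclosure_image : bclosure dball (g @` S) = g @` S.
Proof.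
apply/seteqP; split; last exact: subset_bclosure.
move=> y cl_y; have [i0] := I_inhabited.
pose D := [set ie : I * R | 0 < ie.2].
have D1 : D (i0, 1) by rewrite /D /= ltr01.
pose B (ie : I * R) := S `&` [set x | d ie.1 (g x) y < ie.2].
have [F FU FB] : exists2 F : set_system X, UltraFilter F & forall ie, D ie -> F (B ie).
  apply: ultra_filter_from.
  - by exists (i0, 1).
  - move=> [i1 e1] [i2 e2] /= e10 e20.
    have [i3 [C C0 dC]] := d_directed i1 i2.
    have e0 : 0 < Num.min e1 e2 by rewrite lt_min e10 e20.
    exists (i3, Num.min e1 e2 / C); first by rewrite /D /= divr_gt0.
    move=> x [Sx /=]; rewrite ltr_pdivlMr // mulrC => /(le_lt_trans (dC _ _)).
    by rewrite gt_max !lt_min => /andP[/andP[? _] /andP[_ ?]].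
  - move=> [i e] /= e0; have [] := cl_y (dball i e y) (dball_open _ _ _ d_triangle).
      by rewrite /dball /= d_refl.
    by move=> _ [x Sx <-] gx; exists x.
have [s Ss lim_s] := g_ultra_limit FU (filterS (fun x => @proj1 _ _) (FB _ D1)).
exists s => //; apply: d_separated => i e e0.
have e20 : 0 < e / 2 by rewrite divr_gt0.
have [x [[_ /= x_y] /= x_s]] := filter_ex (filterI (FB (i, e / 2) e20) (lim_s i _ e20)).
by have := d_triangle i (g s) (g x) y; rewrite [d i (g s) (g x)]d_sym; lra.
Qed.

Lemma brelcompact_image : brelcompact dball (g @` S).
Proof. by rewrite /brelcompact bclosure_image; apply: bcompact_image. Qed.

End UltraLimitImage.
End DistanceBalls.

Lemma Kball_open {R : realType} {b : bool} e (z : Kf R b) : bopen Kball (Kball tt e z).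
Proof.
apply: (dball_open (fun _ w z => kabs R b (w - z)) tt) => _ u v w.
by have := kabsD (u - v) (v - w); rewrite addrA subrK.
Qed.

Section Seminorms.
Context {R : realType} {b : bool} {E : lmodType (Kf R b)} {A : Type}.
Context {p : A -> E -> R}.
Variable p_seminorm : forall a, is_seminorm (p a).
Local Notation K := (Kf R b).
Local Notation kabs := (kabs R b).
Local Notation kofR := (kofR R b).

Lemma seminormZ a (c : K) x : p a (c *: x) = kabs c * p a x.
Proof. by case: (p_seminorm a) => _ ->. Qed.

Lemma seminormD a x y : p a (x + y) <= p a x + p a y.
Proof. by case: (p_seminorm a) => ->. Qed.

Lemma seminorm0 a : p a 0 = 0.
Proof. by rewrite -(scale0r (0 : E)) seminormZ kabs0 mul0r. Qed.

Lemma seminormN a x : p a (- x) = p a x.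
Proof. by rewrite -scaleN1r seminormZ kabsN kabs1 mul1r. Qed.

Lemma seminorm_ge0 a x : 0 <= p a x.
Proof. by have := seminormD a x (- x); rewrite subrr seminorm0 seminormN; lra. Qed.

Lemma seminormB_triangle a x y z : p a (x - z) <= p a (x - y) + p a (y - z).
Proof. by have := seminormD a (x - y) (y - z); rewrite addrA subrK. Qed.

Lemma Eball_open a e x : bopen (Eball p) (Eball p a e x).
Proof. exact: (dball_open (fun a y x => p a (y - x))) seminormB_triangle. Qed.

Section LinearFunctional.
Variables (phi : E -> K) (phi_lin : forall c x y, phi (c *: x + y) = c * phi x + phi y).

Lemma linear_functional0 : phi 0 = 0.
Proof.
have := phi_lin 1 0 0; rewrite scaler0 add0r mul1r => h.
by apply: (addrI (phi 0)); rewrite addr0 -h.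
Qed.

Lemma linear_functionalZ c x : phi (c *: x) = c * phi x.
Proof. by rewrite -[c *: x]addr0 phi_lin linear_functional0 addr0. Qed.

Lemma linear_functionalB x y : phi (x - y) = phi x - phi y.
Proof. by rewrite addrC -scaleN1r phi_lin mulN1r addrC. Qed.

Lemma seminorm_bounded_continuous a : (forall x, kabs (phi x) <= p a x) ->
  bcontinuous (Eball p) Kball phi.
Proof.
move=> phi_le O O_open x /= Ox; have [[] [e e0 ballO]] := O_open _ Ox.
exists a, e => // y /= yx; apply: ballO; rewrite /Kball /=.
by rewrite -linear_functionalB; apply: le_lt_trans yx.
Qed.

End LinearFunctional.

Lemma dual_linear (e : dual p) c x y :
  sval e (c *: x + y) = c * sval e x + sval e y.
Proof. exact: (proj1 (svalP e)). Qed.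

Lemma polar_le a (e : dual p) x : polar p a e -> kabs (sval e x) <= p a x.
Proof.
move=> pol_e; rewrite leNgt; apply/negP => px_lt.
pose t := (p a x + kabs (sval e x)) / 2.
have t0 : 0 < t by have := seminorm_ge0 a x; rewrite /t; lra.
have kt : kabs (kofR t^-1) = t^-1 by rewrite kabs_kofR ger0_norm // invr_ge0 ltW.
have : unit_ball p a (kofR t^-1 *: x).
  by rewrite /unit_ball /= seminormZ kt mulrC ltr_pdivrMr // mul1r /t; lra.
move=> /pol_e; rewrite (linear_functionalZ _ (dual_linear e)) kabsM kt.
by rewrite mulrC ler_pdivrMr // mul1r /t; lra.
Qed.

Lemma semi_montel_bounded_precompact N :
  semi_montel p -> lcs_bounded p N -> lcs_precompact p N.
Proof.
move=> montel N_bd a e e0; pose balls := [set Eball p a e x | x in [set: E]].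
have [G [finG Gballs] cover] : exists2 G, finite_set G /\ G `<=` balls &
    bclosure (Eball p) N `<=` \bigcup_(O in G) O.
  apply: montel => // [O [x _ <-]|y _]; first exact: Eball_open.
  by exists (Eball p a e y); [exists y | rewrite /Eball /= subrr seminorm0].
have /choice [c c_center] : forall O, exists x, balls O -> Eball p a e x = O.
  by move=> O; have [[x _ <-]|] := pselect (balls O); [exists x | exists 0].
have [s Gs] := (finite_seqP G).1 finG.
exists (map c s) => z Nz; have [O GO Oz] := cover z (subset_bclosure _ _ _ Nz).
have sO : O \in s by have := GO; rewrite Gs.
exists (c O); first exact: map_f.
by rewrite -(c_center O (Gballs _ GO)) in Oz.
Qed.

Lemma schwartz_bounded_precompact N :
  schwartz p -> lcs_bounded p N -> lcs_precompact p N.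
Proof.
move=> sw N_bd a e e0; have [a' ball_pc] := sw a; have [M N_M] := N_bd a'.
pose t := `|M| + 1; have t0 : 0 < t by rewrite /t ltr_wpDl.
have kt : kabs (kofR t) = t by rewrite kabs_kofR gtr0_norm.
have kVt : kabs (kofR t^-1) = t^-1 by rewrite kabs_kofR gtr0_norm ?invr_gt0.
have [xs cover] := ball_pc (e / t) (divr_gt0 e0 t0).
exists (map (fun x => kofR t *: x) xs) => z Nz.
have : unit_ball p a' (kofR t^-1 *: z).
  rewrite /unit_ball /= seminormZ kVt mulrC ltr_pdivrMr // mul1r.
  by have := N_M z Nz; have := ler_norm M; rewrite /t; lra.
move=> /cover [x xs_x zx]; exists (kofR t *: x); first exact: map_f.
have -> : z - kofR t *: x = kofR t *: (kofR t^-1 *: z - x).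
  by rewrite scalerBr scalerA -kofRM mulfV ?gt_eqF // kofR1 scale1r.
by rewrite seminormZ kt mulrC -ltr_pdivlMr.
Qed.

Lemma bounded_precompact N :
  semi_montel p \/ schwartz p -> lcs_bounded p N -> lcs_precompact p N.
Proof.
by case=> [/(semi_montel_bounded_precompact N) | /(schwartz_bounded_precompact N)].
Qed.

End Seminorms.

Section PolarUltraLimits.
Context {R : realType} {b : bool} {E : lmodType (Kf R b)} {A : Type}.
Context {p : A -> E -> R}.
Variable p_seminorm : forall a, is_seminorm (p a).
Context {a : A} {F : set_system (dual p)}.
Hypothesis F_polar : F (polar p a).
Local Notation kabs := (kabs R b).

Lemma polar_ultra_limit : UltraFilter F ->
  exists2 phi, polar p a phi & forall x, kcvg F (fun e => sval e x) (sval phi x).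
Proof.
move=> FU; have F_le x : F [set e | kabs (sval e x) <= p a x].
  by apply: filterS F_polar => e /(polar_le p_seminorm); apply.
have /choice [phi0 lim] : forall x, exists l, kcvg F (fun e => sval e x) l.
  by move=> x; apply: ultra_bounded_kcvg FU (F_le x).
have phi0_lin c x y : phi0 (c *: x + y) = c * phi0 x + phi0 y.
  apply: kcvg_unique (lim _) _.
  have -> : (fun e : dual p => sval e (c *: x + y)) =
      (fun e => c * sval e x + sval e y) by apply: funext => e; apply: dual_linear.
  exact: kcvg_lc.
have phi0_le x : kabs (phi0 x) <= p a x by exact: kcvg_le (F_le x) (lim x).
have phi0_cont := seminorm_bounded_continuous _ phi0_lin _ phi0_le.
pose phi : dual p := exist _ phi0 (conj phi0_lin phi0_cont).
by exists phi => // x /ltW; apply: le_trans (phi0_le x).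
Qed.

Lemma polar_uniform_limit phi N : Filter F -> polar p a phi ->
  (forall x, kcvg F (fun e => sval e x) (sval phi x)) -> q_precompact (p a) N ->
  forall eps, 0 < eps -> F [set e | forall z, N z -> kabs (sval e z - sval phi z) < eps].
Proof.
move=> FF pol_phi lim N_pc eps eps0; have eps30 : 0 < eps / 3 by rewrite divr_gt0.
have [xs cover] := N_pc _ eps30.
have /(filterI F_polar) : F (\bigcap_(x in [set` seq_fset tt xs])
    [set e | kabs (sval e x - sval phi x) < eps / 3]).
  by apply: filter_bigI => x _; apply: lim.
apply: filterS => e [pol_e near_e] z Nz; have [x xs_x zx] := cover z Nz.
have {}near_e : kabs (sval e x - sval phi x) < eps / 3.
  by apply: near_e; rewrite mksetE seq_fsetE.
have e_zx := le_lt_trans (polar_le p_seminorm _ _ (z - x) pol_e) zx.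
have phi_zx := le_lt_trans (polar_le p_seminorm _ _ (z - x) pol_phi) zx.
rewrite !(linear_functionalB _ (dual_linear _)) in e_zx phi_zx.
have -> : sval e z - sval phi z =
    (sval e z - sval e x) + (sval e x - sval phi x) - (sval phi z - sval phi x).
  by ring.
apply: le_lt_trans (kabsD _ _) _; rewrite kabsN.
by have := kabsD (sval e z - sval e x) (sval e x - sval phi x); lra.
Qed.

End PolarUltraLimits.

Section WeightedSpace.
Context {R : realType} {b : bool} {W : wdata R b}.
Variable HW : wdata_ok W.
Local Notation K := (Kf R b).
Local Notation kabs := (kabs R b).
Local Notation T := (T W).
Local Notation inc := (inc W).
Local Notation nu := (nu W).
Local Notation Ml := (Ml W).
Local Notation wsemi := (wsemi W).

Lemma weight_ge0 j l m x : Ml l m -> 0 <= nu j l m x.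
Proof. by case: HW => _ [_ [_ [_ [_ [nu_ge0 _]]]]]; apply: nu_ge0. Qed.

Lemma T_linear m : dom W m (fun _ => 0) /\
  forall (c : K) f g, dom W m f -> dom W m g ->
    dom W m (fun x => c * f x + g x) /\
    forall y, T m (fun x => c * f x + g x) y = c * T m f y + T m g y.
Proof. by case: HW => _ [_ [_ [_ [_ [_ [_ T_lin]]]]]]; apply: T_lin. Qed.

Section Combinations.
Variables (c : K) (f g : Om W -> K) (Ff : FV W f) (Fg : FV W g).

Lemma T_lc m y : T m (fun x => c * f x + g x) y = c * T m f y + T m g y.
Proof.
by case: Ff Fg => domf _ _ [domg _ _]; case: (T_linear m) => _ /(_ c f g) [].
Qed.

Lemma FV_lc : FV W (fun x => c * f x + g x).
Proof.
case: Ff Fg => domf T0f bdf [domg T0g bdg]; split.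
- by move=> m; case: (T_linear m) => _ /(_ c f g (domf m) (domg m)) [].
- by move=> m M0m y; rewrite T_lc T0f // T0g // mulr0 addr0.
- move=> j l; have [C1 le1] := bdf j l; have [C2 le2] := bdg j l.
  exists (kabs c * C1 + C2) => x m lm; rewrite T_lc.
  apply: le_trans (ler_wpM2r (weight_ge0 _ _ _ _ lm) (kabsD _ _)) _.
  rewrite mulrDl kabsM -mulrA lerD ?le2 //.
  by rewrite ler_wpM2l ?kabs_ge0 ?le1.
Qed.

End Combinations.

Lemma FV_sub f g : FV W f -> FV W g -> FV W (fun x => f x - g x).
Proof.
move=> Ff Fg; have := FV_lc (-1) g f Fg Ff.
by congr FV; apply: funext => x; rewrite mulN1r addrC.
Qed.

Lemma T_sub f g m y : FV W f -> FV W g ->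
  T m (fun x => f x - g x) y = T m f y - T m g y.
Proof.
move=> Ff Fg; have := T_lc (-1) g f Fg Ff m y; rewrite mulN1r addrC => <-.
by congr T; apply: funext => x; rewrite mulN1r addrC.
Qed.

Lemma wsemi_ge j l f x m : FV W f -> Ml l m ->
  kabs (T m f (inc m x)) * nu j l m x <= wsemi j l f.
Proof.
move=> [_ _ /(_ j l) [C leC]] lm; apply: sup_upper_bound; last by exists x, m.
split; first by exists (kabs (T m f (inc m x)) * nu j l m x), x, m.
by exists C => _ [y [n [ln ->]]]; apply: leC.
Qed.

Lemma wsemi_le j l f M :
  (forall x m, Ml l m -> kabs (T m f (inc m x)) * nu j l m x <= M) ->
  wsemi j l f <= M.
Proof.
move=> leM; apply: ge_sup => [|_ [x [m [lm ->]]]]; last exact: leM.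
case: HW => -[[x _] _ _] [/(_ l) [m lm] _].
by exists (kabs (T m f (inc m x)) * nu j l m x), x, m.
Qed.

Lemma wsemi_ge0 j l f : FV W f -> 0 <= wsemi j l f.
Proof.
case: HW => -[[x _] _ _] [/(_ l) [m lm] _] Ff.
by apply: le_trans (wsemi_ge j l f x m Ff lm); rewrite mulr_ge0 ?kabs_ge0 ?weight_ge0.
Qed.

Lemma wsemiB_triangle j l f g h : FV W f -> FV W g -> FV W h ->
  wsemi j l (fun x => f x - h x) <=
  wsemi j l (fun x => f x - g x) + wsemi j l (fun x => g x - h x).
Proof.
move=> Ff Fg Fh; apply: wsemi_le => x m lm; rewrite T_sub //.
rewrite -[T m f _ - _](subrKA (T m g (inc m x))).
apply: le_trans (ler_wpM2r (weight_ge0 _ _ _ _ lm) (kabsD _ _)) _.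
by rewrite mulrDl -!T_sub //; apply: lerD; apply: wsemi_ge => //; apply: FV_sub.
Qed.

Lemma wsemiBC j l f g : FV W f -> FV W g ->
  wsemi j l (fun x => f x - g x) = wsemi j l (fun x => g x - f x).
Proof.
move=> Ff Fg; rewrite /wsemi; congr sup; apply/seteqP.
by split=> _ [x [m [lm ->]]]; exists x, m; rewrite !T_sub // kabsB.
Qed.

Lemma wsemi_subrr j l f : FV W f -> wsemi j l (fun x => f x - f x) = 0.
Proof.
move=> Ff; apply/eqP; rewrite eq_le wsemi_ge0 ?andbT; last exact: FV_sub.
by apply: wsemi_le => x m lm; rewrite T_sub // subrr kabs0 mul0r.
Qed.

End WeightedSpace.

Section WeightedTopology.
Context {R : realType} {b : bool} {W : wdata R b}.
Variables (HW : wdata_ok W) (W_dom : dom_space W).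
Local Notation FVt := (FVt W).

Lemma FVt_ext (g h : FVt) : sval g = sval h -> g = h.
Proof.
by case: g h => g Fg [h Fh] /= gh; subst h; congr exist; apply: Prop_irrelevance.
Qed.

Definition FVsub (g h : FVt) : FVt :=
  exist _ (fun x => sval g x - sval h x) (FV_sub HW _ _ (svalP g) (svalP h)).

Definition FVdist (jl : Jt W * Lt W) (g h : FVt) : R :=
  wsemi W jl.1 jl.2 (sval (FVsub g h)).

Lemma FVdist_triangle jl g h k : FVdist jl g k <= FVdist jl g h + FVdist jl h k.
Proof. exact: wsemiB_triangle (svalP g) (svalP h) (svalP k). Qed.

Lemma FVdistC jl g h : FVdist jl g h = FVdist jl h g.
Proof. exact: wsemiBC (svalP g) (svalP h). Qed.

Lemma FVdist_refl jl g : FVdist jl g g = 0.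
Proof. exact: wsemi_subrr (svalP g). Qed.

Lemma FVdist_directed jl1 jl2 : exists jl3, exists2 C : R, 0 < C &
  forall g h, Num.max (FVdist jl1 g h) (FVdist jl2 g h) <= C * FVdist jl3 g h.
Proof.
have [j3 [l3 [C C0 leC]]] := W_dom.1 jl1.1 jl1.2 jl2.1 jl2.2.
by exists (j3, l3), C => // g h; apply: leC (FVsub g h).
Qed.

Lemma FVdist_separated g h : (forall jl e, 0 < e -> FVdist jl g h < e) -> g = h.
Proof.
(* Point evaluations are continuous on the dom-space FV(Omega). *)
move=> small; apply/FVt_ext/funext => x; apply: contrapT => /eqP.
rewrite -subr_eq0 => /kabs_gt0 d0.
pose O := Kball tt (kabs R b (sval g x - sval h x)) (sval h x).
have Ohx : O (sval h x) by rewrite /O /Kball /= subrr kabs0.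
have [jl [e e0 ballO]] := W_dom.2 x O (Kball_open _ _) h Ohx.
have := ballO g (small jl e e0); rewrite /O /Kball /=; by rewrite lt_irreflexive.
Qed.

End WeightedTopology.

Section FixingSets.
Context {R : realType} {b : bool} {W : wdata R b} {U : forall m, set (om W m)}.
Variables (HW : wdata_ok W) (W_dom : dom_space W) (HU : fixes_topology W U).
Local Notation kabs := (kabs R b).
Local Notation T := (T W).
Local Notation inc := (inc W).

Lemma fixes_topology_le j l : exists i k, exists2 C : R, 0 < C &
  forall (g : FVt W) M, 0 <= M ->
  (forall x m, Ml W k m -> U m (inc m x) ->
     kabs (T m (sval g) (inc m x)) * nu W i k m x <= M) ->
  wsemi W j l (sval g) <= C * M.
Proof.
have [i [k [C C0 leC]]] := HU j l; exists i, k, C => // g M M0 leM.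
apply: le_trans (leC g) _; rewrite ler_pM2l //.
have [[r Sr]|S0] := pselect ([set r | exists x m, [/\ Ml W k m, U m (inc m x) &
    r = kabs (T m (sval g) (inc m x)) * nu W i k m x]] !=set0).
  by apply: ge_sup; [exists r | move=> _ [x [m [km Ux ->]]]; apply: leM].
by rewrite (_ : [set _ | _] = set0) ?sup0 // -subset0 => r Sr; apply: S0; exists r.
Qed.

Lemma FVt_eq_on_U (g h : FVt W) :
  (forall m y, U m y -> T m (sval g) y = T m (sval h) y) -> g = h.
Proof.
move=> gh; apply: (FVdist_separated HW W_dom) => jl e e0.
have [i [k [C C0 leC]]] := fixes_topology_le jl.1 jl.2.
apply: le_lt_trans (leC (FVsub HW g h) 0 (lexx 0) _) _; last by rewrite mulr0.
move=> x m _ Ux; rewrite (T_sub HW _ _ _ _ (svalP g) (svalP h)) gh //.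
by rewrite subrr kabs0 mul0r.
Qed.

End FixingSets.

Section RestrictionMap.
Context {R : realType} {b : bool} {E : lmodType (Kf R b)} {A : Type} {W : wdata R b}.
Context {p : A -> E -> R}.
Variable p_seminorm : forall a, is_seminorm (p a).
Hypothesis E_montel_schwartz : semi_montel p \/ schwartz p.
Variables (HW : wdata_ok W) (W_dom : dom_space W).
Context {U : forall m, set (om W m)} {f : forall m, om W m -> E}.
Context {Rf : dual p -> FVt W}.
Hypotheses (HU : fixes_topology W U) (Hf : FVE'_lb p U f).
Hypothesis Rf_on_U : forall e m y, U m y -> T W m (sval (Rf e)) y = sval e (f m y).
Local Notation kabs := (kabs R b).
Local Notation kofR := (kofR R b).
Local Notation FVdist := (FVdist HW).

Lemma FVdist_Rf_le jl : exists i k, exists2 C : R, 0 < C &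
  forall e1 e2 M, 0 <= M ->
  (forall z, N_U U f i k z -> kabs (sval e1 z - sval e2 z) <= M) ->
  FVdist jl (Rf e1) (Rf e2) <= C * M.
Proof.
have [i [k [C C0 leC]]] := fixes_topology_le HU jl.1 jl.2.
exists i, k, C => // e1 e2 M M0 leM; apply: leC => // x m km Ux.
have nu0 := weight_ge0 HW i k m x km.
rewrite (T_sub HW _ _ _ _ (svalP (Rf e1)) (svalP (Rf e2))) !Rf_on_U //.
have /leM : N_U U f i k (kofR (nu W i k m x) *: f m (inc W m x)) by exists x, m.
rewrite !(linear_functionalZ _ (dual_linear _)) -mulrBr kabsM kabs_kofR.
by rewrite ger0_norm // mulrC.
Qed.

Lemma Rf_linear c e1 e2 e3 :
  (forall x, sval e3 x = c * sval e1 x + sval e2 x) ->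
  forall t, sval (Rf e3) t = c * sval (Rf e1) t + sval (Rf e2) t.
Proof.
move=> e3E; pose h : FVt W := exist _ _ (FV_lc HW c _ _ (svalP (Rf e1)) (svalP (Rf e2))).
suff -> : Rf e3 = h by [].
apply: (FVt_eq_on_U HW W_dom HU) => m y Uy.
by rewrite Rf_on_U // (T_lc HW _ _ _ (svalP (Rf e1)) (svalP (Rf e2))) !Rf_on_U // e3E.
Qed.

Lemma Rf_continuous : bcontinuous (gamma_ball p) (FVball W) Rf.
Proof.
move=> O O_open e0 /= Oe0; have [jl [eps eps0 ballO]] := O_open _ Oe0.
have [i [k [C C0 leC]]] := FVdist_Rf_le jl.
have N_pc := bounded_precompact p_seminorm _ E_montel_schwartz (Hf.2 i k).
have d0 : 0 < eps / (2 * C) by rewrite divr_gt0 ?mulr_gt0.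
exists (exist _ _ N_pc), (eps / (2 * C)) => // e /= near_e; apply: ballO.
apply: le_lt_trans (leC e e0 _ (ltW d0) (fun z Nz => ltW (near_e z Nz))) _.
have -> : C * (eps / (2 * C)) = eps / 2 by field; rewrite gt_eqF.
lra.
Qed.

Lemma Rf_polar_ultra_limit a F : UltraFilter F -> F (polar p a) ->
  exists2 phi, polar p a phi &
    forall jl e, 0 < e -> F [set e' | FVdist jl (Rf e') (Rf phi) < e].
Proof.
move=> FU F_polar; have [phi pol_phi lim] := polar_ultra_limit p_seminorm F_polar FU.
exists phi => // jl eps eps0; have [i [k [C C0 leC]]] := FVdist_Rf_le jl.
have N_pc := bounded_precompact p_seminorm _ E_montel_schwartz (Hf.2 i k) a.
have d0 : 0 < eps / (2 * C) by rewrite divr_gt0 ?mulr_gt0.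
apply: filterS
  (polar_uniform_limit p_seminorm F_polar _ _ _ pol_phi lim N_pc _ d0) => e near_e.
apply: le_lt_trans (leC e phi _ (ltW d0) (fun z Nz => ltW (near_e z Nz))) _.
have -> : C * (eps / (2 * C)) = eps / 2 by field; rewrite gt_eqF.
lra.
Qed.

Lemma Rf_polar_relcompact a : brelcompact (FVball W) [set Rf e | e in polar p a].
Proof.
apply: (brelcompact_image FVdist).
- by move=> F FU; apply: Rf_polar_ultra_limit.
- by case: HW => -[_ [j _] [l _]] _; constructor; exact: (j, l).
- exact: FVdist_triangle.
- exact: FVdistC.
- exact: FVdist_refl.
- exact: FVdist_directed W_dom.
- exact: FVdist_separated W_dom.
Qed.

End RestrictionMap.

Theorem proposition4p4 (R : realType) (b : bool)
  (E : lmodType (Kf R b)) (A : Type) (p : A -> E -> R)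
  (HA : exists a : A, True)
  (Hsemi : forall a, is_seminorm (p a))
  (Hdir : directed_seminorms p)
  (Hhaus : lcs_hausdorff p)
  (Hnontriv : exists x : E, x != 0)
  (HE : semi_montel p \/ schwartz p)
  (W : wdata R b) (HW : wdata_ok W)
  (Hdom : dom_space W)
  (U : forall m : Mt W, set (om W m))
  (HU : fixes_topology W U)
  (f : forall m : Mt W, om W m -> E)
  (Hf : FVE'_lb p U f)
  (Rf : dual p -> FVt W)
  (HRf : forall (e' : dual p) (m : Mt W) (y : om W m),
           U m y -> T W m (proj1_sig (Rf e')) y = proj1_sig e' (f m y)) :
  (* R_f is linear ... *)
  (forall (c : Kf R b) (e1 e2 e3 : dual p),
     (forall x, proj1_sig e3 x = c * proj1_sig e1 x + proj1_sig e2 x) ->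
     forall t, proj1_sig (Rf e3) t = c * proj1_sig (Rf e1) t + proj1_sig (Rf e2) t) /\
  (* ... and continuous from E'_gamma to FV(Omega) ... *)
  bcontinuous (gamma_ball p) (FVball W) Rf /\
  (* ... and R_f(B_alpha^polar) is relatively compact in FV(Omega) *)
  (forall a : A, brelcompact (FVball W) [set Rf e' | e' in polar p a]).
Proof.
split; first exact: (Rf_linear HW Hdom HU HRf).
split; first exact: (Rf_continuous Hsemi HE HW HU Hf HRf).
exact: (Rf_polar_relcompact Hsemi HE HW Hdom HU Hf HRf).
Qed.
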